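(* Let $u=v$ be a context equation and let $u'=v'$ be obtained from it by one of the following operations: (1) replacing all occurrences of a context variable $X$ by $tX$ (respectively all occurrences of a variable $x$ by $tx$), where $t$ is a context term; (2) replacing all occurrences of a context variable $X$ by $Xt$, where $t$ is a context term; (3) replacing all occurrences of a variable $x$ by a ground term $t$; (4) performing an $(f,i,a)$ leaf compression on $u=v$; (5) performing an $a,b$ pair compression on $u=v$; (6) performing an $a$-maximal chain compression on $u=v$. If $u'=v'$ has a solution then $u=v$ has a solution.
   Context: $\Sigma$ is a ranked signature; $\Omega$ is a special constant not in $\Sigma$; context variables have arity $1$, variables arity $0$. Ground terms: finite ordered trees over $\Sigma$ with each node labelled $f$ having $\mathrm{ar}(f)$ children; ground contexts: ground terms over $\Sigma\cup\{\Omega\}$ with exactly one $\Omega$; terms: such trees over $\Sigma$, variables and context variables; context terms: trees over $\Sigma$, variables, context variables and $\Omega$ with exactly one $\Omega$. For a term or context term $s$ with one $\Omega$, ''replacing $X$ by $tX$'' means replacing each subterm $X(s)$ by $t$ with $\Omega$ replaced by $X(s)$, and ''replacing $X$ by $Xt$'' means replacing each $X(s)$ by $X(t')$ where $t'$ is $t$ with $\Omega$ replaced by $s$. A context equation is $u=v$ with $u,v$ terms. A substitution $\sigma$ assigns ground contexts to context variables and ground terms to variables, extended by $\sigma(a)=a$, $\sigma(f(t_1,\dots,t_m))=f(\sigma(t_1),\dots,\sigma(t_m))$, $\sigma(Xt)=\sigma(X)\sigma(t)$; a solution satisfies $\sigma(u)=\sigma(v)$. The compressions are performed on the equation viewed as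 a tree whose root is labelled $=$ with children $u$ and $v$ (variables and context variables are never compressed), with fresh letters not occurring in the equation: $(f,i,a)$ leaf compression ($\mathrm{ar}(f)=m\ge i\ge1$, $a$ a constant) replaces each subtree $f(t_1,\dots,t_{i-1},a,t_{i+1},\dots,t_m)$ by $f'(t_1,\dots,t_{i-1},t_{i+1},\dots,t_m)$ with $f'$ a fresh letter of arity $m-1$; $a,b$ pair compression ($a,b$ unary) replaces each node labelled $a$ whose child is labelled $b$, together with that child, by one node labelled by a fresh unary letter $c$; $a$-maximal chain compression ($a$ unary) replaces each maximal (upward and downward) chain of $\ell$ consecutive nodes labelled $a$ by one node labelled with a fresh unary letter $a_\ell$ (distinct for distinct $\ell$). *)

From mathcomp Require Import all_boot.
Set Implicit Arguments. Unset Strict Implicit. Unset Printing Implicit Defensive.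

(* Trees over letters F (ranked by ar), variables V, context variables CV,
   and the special constant Omega (Hole). *)
Inductive tm (F V CV : Type) : Type :=
| App : F -> seq (tm F V CV) -> tm F V CV
| Var : V -> tm F V CV
| CApp : CV -> tm F V CV -> tm F V CV
| Hole : tm F V CV.

Arguments Hole {F V CV}.
Arguments App {F V CV}.
Arguments Var {F V CV}.
Arguments CApp {F V CV}.

Section Ctx.
Variables (F V CV : eqType) (ar : F -> nat).
Notation term := (tm F V CV).

Fixpoint wf (Sig : pred F) (t : term) : bool :=
  match t with
  | App f ts => [&& Sig f, size ts == ar f & all (wf Sig) ts]
  | Var _ => true
  | CApp _ s => wf Sig s
  | Hole => true
  end.

Fixpoint holes (t : term) : nat :=
  match t with
  | App _ ts => sumn (map holes ts)
  | Var _ => 0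
  | CApp _ s => holes s
  | Hole => 1
  end.

Fixpoint novars (t : term) : bool :=
  match t with
  | App _ ts => all novars ts
  | Var _ => false
  | CApp _ _ => false
  | Hole => true
  end.

Fixpoint occurs (g : F) (t : term) : bool :=
  match t with
  | App h ts => (h == g) || has (occurs g) ts
  | Var _ => false
  | CApp _ s => occurs g s
  | Hole => false
  end.

Definition is_term Sig t := wf Sig t && (holes t == 0).
Definition is_ctxterm Sig t := wf Sig t && (holes t == 1).
Definition is_ground Sig t := is_term Sig t && novars t.
Definition is_gctx Sig t := is_ctxterm Sig t && novars t.

Fixpoint plug (c s : term) : term :=
  match c with
  | App f ts => App f (map (fun c' => plug c' s) ts)
  | Var x => Var x
  | CApp X c' => CApp X (plug c' s)
  | Hole => s
  end.

Fixpoint subst (sv : V -> term) (sc : CV -> term) (t : term) : term :=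
  match t with
  | App f ts => App f (map (subst sv sc) ts)
  | Var x => sv x
  | CApp X s => plug (sc X) (subst sv sc s)
  | Hole => Hole
  end.

Definition solvable (Sig : pred F) (u v : term) : Prop :=
  exists (sv : V -> term) (sc : CV -> term),
    [/\ forall x, is_ground Sig (sv x),
        forall X, is_gctx Sig (sc X) &
        subst sv sc u = subst sv sc v].

Fixpoint repl_CX_left (X : CV) (t s : term) : term :=
  match s with
  | App f ss => App f (map (repl_CX_left X t) ss)
  | Var y => Var y
  | CApp Y s' => if Y == X then plug t (CApp X (repl_CX_left X t s'))
                 else CApp Y (repl_CX_left X t s')
  | Hole => Hole
  end.

Fixpoint repl_x_left (x : V) (t s : term) : term :=
  match s with
  | App f ss => App f (map (repl_x_left x t) ss)
  | Var y => if y == x then plug t (Var x) else Var y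
  | CApp Y s' => CApp Y (repl_x_left x t s')
  | Hole => Hole
  end.

Fixpoint repl_CX_right (X : CV) (t s : term) : term :=
  match s with
  | App f ss => App f (map (repl_CX_right X t) ss)
  | Var y => Var y
  | CApp Y s' => if Y == X then CApp X (plug t (repl_CX_right X t s'))
                 else CApp Y (repl_CX_right X t s')
  | Hole => Hole
  end.

Fixpoint repl_x (x : V) (t s : term) : term :=
  match s with
  | App f ss => App f (map (repl_x x t) ss)
  | Var y => if y == x then t else Var y
  | CApp Y s' => CApp Y (repl_x x t s')
  | Hole => Hole
  end.

Definition is_leaf (a : F) (t : term) : bool :=
  if t is App b [::] then b == a else false.

(* (4) (f,i,a) leaf compression with fresh f' (i is 1-based) *)
Fixpoint leaf_comp (f : F) (i : nat) (a f' : F) (t : term) : term :=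
  match t with
  | App g ts =>
      if (g == f) && is_leaf a (nth Hole ts i.-1)
      then let ts' := map (leaf_comp f i a f') ts in
           App f' (take i.-1 ts' ++ drop i ts')
      else App g (map (leaf_comp f i a f') ts)
  | Var y => Var y
  | CApp Y s => CApp Y (leaf_comp f i a f' s)
  | Hole => Hole
  end.

Fixpoint pair_comp (a b c : F) (t : term) : term :=
  match t with
  | App g ts =>
      match ts with
      | [:: App h [:: s]] =>
          if (g == a) && (h == b) then App c [:: pair_comp a b c s]
          else App g (map (pair_comp a b c) ts)
      | _ => App g (map (pair_comp a b c) ts)
      end
  | Var y => Var y
  | CApp Y s => CApp Y (pair_comp a b c s)
  | Hole => Hole
  end.

(* (6) a-maximal chain compression; al l is the fresh letter a_l.
   chain_comp k t : t sits directly below a (maximal upward) chain of k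
   nodes labelled a which is still to be emitted. *)
Definition wrap (al : nat -> F) (k : nat) (t : term) : term :=
  if k == 0 then t else App (al k) [:: t].

Fixpoint chain_comp (a : F) (al : nat -> F) (k : nat) (t : term) : term :=
  match t with
  | App g ts =>
      match ts with
      | [:: s] => if g == a then chain_comp a al k.+1 s
                  else wrap al k (App g [:: chain_comp a al 0 s])
      | _ => wrap al k (App g (map (chain_comp a al 0) ts))
      end
  | Var y => wrap al k (Var y)
  | CApp Y s => wrap al k (CApp Y (chain_comp a al 0 s))
  | Hole => wrap al k Hole
  end.

Definition fresh_in (g : F) (u v : term) := ~~ occurs g u && ~~ occurs g v.

Inductive step (Sig : pred F) (u v : term) : pred F -> term -> term -> Prop :=
| StepCXleft X t : is_ctxterm Sig t ->
    step Sig u v Sig (repl_CX_left X t u) (repl_CX_left X t v)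
| StepXleft x t : is_ctxterm Sig t ->
    step Sig u v Sig (repl_x_left x t u) (repl_x_left x t v)
| StepCXright X t : is_ctxterm Sig t ->
    step Sig u v Sig (repl_CX_right X t u) (repl_CX_right X t v)
| StepX x t : is_ground Sig t ->
    step Sig u v Sig (repl_x x t u) (repl_x x t v)
| StepLeaf f i a f' : Sig f -> Sig a -> 1 <= i <= ar f -> ar a = 0 ->
    ar f' = (ar f).-1 -> fresh_in f' u v ->
    step Sig u v [pred g | Sig g || (g == f')]
         (leaf_comp f i a f' u) (leaf_comp f i a f' v)
| StepPair a b c : Sig a -> Sig b -> a != b -> ar a = 1 -> ar b = 1 ->
    ar c = 1 -> fresh_in c u v ->
    step Sig u v [pred g | Sig g || (g == c)]
         (pair_comp a b c u) (pair_comp a b c v)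
| StepChain a (al : nat -> F) (Sig' : pred F) : Sig a -> ar a = 1 ->
    (forall l, 0 < l -> ar (al l) = 1) ->
    (forall l1 l2, 0 < l1 -> 0 < l2 -> al l1 = al l2 -> l1 = l2) ->
    (forall l, 0 < l -> fresh_in (al l) u v) ->
    (forall g, Sig' g <-> Sig g \/ exists2 l, 0 < l & g = al l) ->
    step Sig u v Sig'
         (chain_comp a al 0 u) (chain_comp a al 0 v).

End Ctx.

From Pilot Require Import Defs.
From Stdlib Require Import ClassicalEpsilon.
From mathcomp Require Import all_boot.
Set Implicit Arguments. Unset Strict Implicit. Unset Printing Implicit Defensive.

(* The substitution operations (1)-(3) are undone on the level of solutions:
   a solution of u' = v' composed with the substitution [X |-> tX], [X |-> Xt]
   or [x |-> t] is a solution of u = v.  The compressions (4)-(6) are undone by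
   decompression, the homomorphism of trees that expands each fresh letter back
   into the piece of tree it abbreviates (f' into f with the leaf a reinserted,
   c into a(b(.)), a_l into a^l).  Decompression commutes with plugging and
   substitution, preserves ground terms and contexts, and maps the compressed
   equation back onto u = v since u and v do not contain the fresh letters;
   hence it maps solutions of u' = v' to solutions of u = v. *)

Section Terms.
Variables (F V CV : eqType) (ar : F -> nat).
Notation term := (tm F V CV).

Fixpoint all_tm (P : term -> Prop) (ts : seq term) : Prop :=
  if ts is t :: ts' then P t /\ all_tm P ts' else True.

Section NestedInduction.
Variable P : term -> Prop.
Hypotheses (P_App : forall f ts, all_tm P ts -> P (App f ts))
  (P_Var : forall x, P (Var x)) (P_CApp : forall X s, P s -> P (CApp X s))
  (P_Hole : P Hole).

Fixpoint tm_nested_ind (t : term) : P t :=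
  match t with
  | App f ts => P_App f ((fix all_ind (ts : seq term) : all_tm P ts :=
      if ts is t :: ts' then conj (tm_nested_ind t) (all_ind ts') else I) ts)
  | Var x => P_Var x
  | CApp X s => P_CApp X (tm_nested_ind s)
  | Hole => P_Hole
  end.
End NestedInduction.

Lemma eq_map_all_tm (A : Type) (f g : term -> A) ts :
  all_tm (fun t => f t = g t) ts -> map f ts = map g ts.
Proof. by elim: ts => //= t ts IH [-> /IH ->]. Qed.

Lemma all_tm_impl (P Q : term -> Prop) ts :
  all_tm P ts -> (forall t, P t -> Q t) -> all_tm Q ts.
Proof. by elim: ts => //= t ts IH [Pt Pts] PQ; split; [apply: PQ | apply: IH]. Qed.

Lemma all_tm_apply (q : pred term) (R : term -> Prop) ts :
  all_tm (fun t => q t -> R t) ts -> all q ts -> all_tm R ts.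
Proof. by elim: ts => //= t ts IH [Rt Rts] /andP[qt qts]; split; [apply: Rt | apply: IH]. Qed.

Lemma all_tm_apply_forall (I : Type) (C : I -> Prop) (q : I -> pred term)
    (R : term -> Prop) ts :
  all_tm (fun t => (forall i, C i -> q i t) -> R t) ts ->
  (forall i, C i -> all (q i) ts) -> all_tm R ts.
Proof.
elim: ts => //= t ts IH [Rt Rts] qts; split.
  by apply: Rt => i /qts /andP[].
by apply: IH => // i /qts /andP[].
Qed.

Lemma all_tmP (q : pred term) ts : all_tm (fun t => q t) ts -> all q ts.
Proof. by elim: ts => //= t ts IH [-> /IH]. Qed.

Lemma sumn_holes0 ts : sumn (map (@holes _ _ _) ts) = 0 ->
  all_tm (fun t : term => holes t = 0) ts.
Proof. by elim: ts => //= t ts IH /eqP; rewrite addn_eq0 => /andP[/eqP -> /eqP /IH]. Qed.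

Lemma plugA (a b c : term) : plug (plug a b) c = plug a (plug b c).
Proof.
elim/tm_nested_ind: a => [f ts IH|x|X s IH|] //=; last by rewrite IH.
by congr App; rewrite -map_comp; apply: eq_map_all_tm.
Qed.

Lemma plug_holes0 (c s : term) : holes c = 0 -> plug c s = c.
Proof.
elim/tm_nested_ind: c => [f ts IH|x|X c IH|] //=; last by move=> /IH ->.
move=> /sumn_holes0 ts0; congr App; rewrite -[RHS]map_id; apply: eq_map_all_tm.
by elim: ts IH ts0 => //= t ts IHts [IHt IH] [t0 ts0]; split; [apply: IHt | apply: IHts].
Qed.

Lemma holes_plug (c s : term) : holes (plug c s) = holes c * holes s.
Proof.
elim/tm_nested_ind: c => [f ts IH|x|X c IH|] //=; last by rewrite mul1n.
rewrite -map_comp (eq_map_all_tm (g := fun c => holes c * holes s) IH).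
by elim: ts {IH} => //= t ts ->; rewrite mulnDl.
Qed.

Lemma novars_plug (c s : term) : novars c -> novars s -> novars (plug c s).
Proof.
move=> + ns; elim/tm_nested_ind: c => [f ts IH|x|X c IH|] //= nts.
by rewrite all_map; apply: all_tmP (all_tm_apply IH nts).
Qed.

Lemma wf_plug Sig (c s : term) : wf ar Sig c -> wf ar Sig s -> wf ar Sig (plug c s).
Proof.
move=> + ws; elim/tm_nested_ind: c => [f ts IH|x|X c IH|] //=.
case/and3P=> -> /eqP sz wts; rewrite size_map sz eqxx all_map.
exact: all_tmP (all_tm_apply IH wts).
Qed.

Lemma subst_plug sv sc (c s : term) : (forall x, holes (sv x) = 0) ->
  subst sv sc (plug c s) = plug (subst sv sc c) (subst sv sc s).
Proof.
move=> sv0; elim/tm_nested_ind: c => [f ts IH|x|X c IH|] //=.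
- by congr App; rewrite -!map_comp; apply: eq_map_all_tm.
- by rewrite plug_holes0.
- by rewrite IH plugA.
Qed.

Lemma subst_novars sv sc (t : term) : novars t -> subst sv sc t = t.
Proof.
elim/tm_nested_ind: t => [f ts IH|x|X c IH|] //= nts.
by congr App; rewrite -[RHS]map_id; apply: eq_map_all_tm (all_tm_apply IH nts).
Qed.

Lemma holes_subst sv sc (t : term) : (forall x, holes (sv x) = 0) ->
  (forall X, holes (sc X) = 1) -> holes (subst sv sc t) = holes t.
Proof.
move=> sv0 sc1; elim/tm_nested_ind: t => [f ts IH|x|X c IH|] //=.
- by rewrite -map_comp; congr sumn; apply: eq_map_all_tm.
- by rewrite holes_plug sc1 mul1n IH.
Qed.

Lemma novars_subst sv sc (t : term) : (forall x, novars (sv x)) ->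
  (forall X, novars (sc X)) -> novars (subst sv sc t).
Proof.
move=> nsv nsc; elim/tm_nested_ind: t => [f ts IH|x|X c IH|] //=.
- by rewrite all_map; apply: all_tmP.
- exact: novars_plug.
Qed.

Lemma wf_subst Sig sv sc (t : term) : (forall x, wf ar Sig (sv x)) ->
  (forall X, wf ar Sig (sc X)) -> wf ar Sig t -> wf ar Sig (subst sv sc t).
Proof.
move=> wsv wsc; elim/tm_nested_ind: t => [f ts IH|x|X c IH|] //=.
- case/and3P=> -> /eqP sz wts; rewrite size_map sz eqxx all_map.
  exact: all_tmP (all_tm_apply IH wts).
- by move=> wc; apply: wf_plug => //; apply: IH.
Qed.

Lemma ground_holes0 Sig (t : term) : is_ground ar Sig t -> holes t = 0.
Proof. by case/andP=> /andP[_ /eqP]. Qed.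

Lemma gctx_holes1 Sig (t : term) : is_gctx ar Sig t -> holes t = 1.
Proof. by case/andP=> /andP[_ /eqP]. Qed.

Lemma is_gctx_plug Sig (c s : term) :
  is_gctx ar Sig c -> is_gctx ar Sig s -> is_gctx ar Sig (plug c s).
Proof.
case/andP=> /andP[wc /eqP hc] nc /andP[/andP[ws /eqP hs] ns].
by rewrite /is_gctx /is_ctxterm wf_plug // holes_plug hc hs novars_plug.
Qed.

Lemma is_ground_plug Sig (c s : term) :
  is_gctx ar Sig c -> is_ground ar Sig s -> is_ground ar Sig (plug c s).
Proof.
case/andP=> /andP[wc /eqP hc] nc /andP[/andP[ws /eqP hs] ns].
by rewrite /is_ground /is_term wf_plug // holes_plug hc hs novars_plug.
Qed.

Lemma is_gctx_subst Sig sv sc (t : term) : (forall x, is_ground ar Sig (sv x)) ->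
  (forall X, is_gctx ar Sig (sc X)) -> is_ctxterm ar Sig t ->
  is_gctx ar Sig (subst sv sc t).
Proof.
move=> gsv gsc /andP[wt /eqP ht].
rewrite /is_gctx /is_ctxterm holes_subst ?ht //; last first.
- by move=> X; apply: gctx_holes1 (gsc X).
- by move=> x; apply: ground_holes0 (gsv x).
rewrite wf_subst ?novars_subst // => [x|X|x|X].
- by case/andP: (gsv x).
- by case/andP: (gsc X).
- by case/andP: (gsv x) => /andP[].
- by case/andP: (gsc X) => /andP[].
Qed.

Section Replacements.
Variables (sv : V -> term) (sc : CV -> term).
Hypothesis sv_holes0 : forall x, holes (sv x) = 0.

Lemma subst_repl_CX_left X t s :
  subst sv sc (repl_CX_left X t s) =
  subst sv [eta sc with X |-> plug (subst sv sc t) (sc X)] s.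
Proof.
elim/tm_nested_ind: s => [f ts IH|x|Y s IH|] //=.
- by congr App; rewrite -map_comp; apply: eq_map_all_tm.
- case: eqP => [_|_] /=; last by rewrite IH.
  by rewrite subst_plug //= plugA IH.
Qed.

Lemma subst_repl_x_left x t s :
  subst sv sc (repl_x_left x t s) =
  subst [eta sv with x |-> plug (subst sv sc t) (sv x)] sc s.
Proof.
elim/tm_nested_ind: s => [f ts IH|y|Y s IH|] //=.
- by congr App; rewrite -map_comp; apply: eq_map_all_tm.
- by case: eqP => _ //=; rewrite subst_plug.
- by rewrite IH.
Qed.

Lemma subst_repl_CX_right X t s :
  subst sv sc (repl_CX_right X t s) =
  subst sv [eta sc with X |-> plug (sc X) (subst sv sc t)] s.
Proof.
elim/tm_nested_ind: s => [f ts IH|x|Y s IH|] //=.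
- by congr App; rewrite -map_comp; apply: eq_map_all_tm.
- case: eqP => [_|_] /=; last by rewrite IH.
  by rewrite subst_plug //= plugA IH.
Qed.

Lemma subst_repl_x x t s : novars t ->
  subst sv sc (repl_x x t s) = subst [eta sv with x |-> t] sc s.
Proof.
move=> nt; elim/tm_nested_ind: s => [f ts IH|y|Y s IH|] //=.
- by congr App; rewrite -map_comp; apply: eq_map_all_tm.
- by case: eqP => _ //=; rewrite subst_novars.
- by rewrite IH.
Qed.
End Replacements.

Section SolvableReplacements.
Variables (Sig : pred F) (u v : term).

Lemma solvable_repl_CX_left X t : is_ctxterm ar Sig t ->
  solvable ar Sig (repl_CX_left X t u) (repl_CX_left X t v) -> solvable ar Sig u v.
Proof.
move=> ct [sv [sc [gsv gsc eq_uv]]]; have sv0 x := ground_holes0 (gsv x).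
exists sv, [eta sc with X |-> plug (subst sv sc t) (sc X)]; split => //.
  by move=> Y /=; case: eqP => _ //; apply: is_gctx_plug (is_gctx_subst gsv gsc ct) _.
by rewrite -!subst_repl_CX_left.
Qed.

Lemma solvable_repl_x_left x t : is_ctxterm ar Sig t ->
  solvable ar Sig (repl_x_left x t u) (repl_x_left x t v) -> solvable ar Sig u v.
Proof.
move=> ct [sv [sc [gsv gsc eq_uv]]]; have sv0 y := ground_holes0 (gsv y).
exists [eta sv with x |-> plug (subst sv sc t) (sv x)], sc; split => //.
  by move=> y /=; case: eqP => _ //; apply: is_ground_plug (is_gctx_subst gsv gsc ct) _.
by rewrite -!subst_repl_x_left.
Qed.

Lemma solvable_repl_CX_right X t : is_ctxterm ar Sig t ->
  solvable ar Sig (repl_CX_right X t u) (repl_CX_right X t v) -> solvable ar Sig u v.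
Proof.
move=> ct [sv [sc [gsv gsc eq_uv]]]; have sv0 x := ground_holes0 (gsv x).
exists sv, [eta sc with X |-> plug (sc X) (subst sv sc t)]; split => //.
  by move=> Y /=; case: eqP => _ //; apply: is_gctx_plug _ (is_gctx_subst gsv gsc ct).
by rewrite -!subst_repl_CX_right.
Qed.

Lemma solvable_repl_x x t : is_ground ar Sig t ->
  solvable ar Sig (repl_x x t u) (repl_x x t v) -> solvable ar Sig u v.
Proof.
move=> gt [sv [sc [gsv gsc eq_uv]]]; have sv0 y := ground_holes0 (gsv y).
have nt : novars t by case/andP: gt.
exists [eta sv with x |-> t], sc; split => //.
  by move=> y /=; case: eqP.
by rewrite -!subst_repl_x.
Qed.
End SolvableReplacements.

Fixpoint decompress (h : F -> seq term -> term) (t : term) : term :=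
  match t with
  | App g ts => h g (map (decompress h) ts)
  | Var y => Var y
  | CApp Y s => CApp Y (decompress h s)
  | Hole => Hole
  end.

Lemma decompress_App h g ts : decompress h (App g ts) = h g (map (decompress h) ts).
Proof. by []. Qed.

(* Naturality is asked for every map commuting with [App]: both [plug _ s]
   and [subst sv sc] are such maps. *)
Record expansion (Sig Sig' : pred F) (h : F -> seq term -> term) : Prop := {
  expansion_natural : forall phi : term -> term,
    (forall g ts, phi (App g ts) = App g (map phi ts)) ->
    forall g ts, phi (h g ts) = h g (map phi ts);
  expansion_holes : forall g ts, holes (h g ts) = sumn (map (@holes _ _ _) ts);
  expansion_novars : forall g ts, novars (h g ts) = all (@novars _ _ _) ts;
  expansion_wf : forall g ts, Sig' g -> size ts = ar g ->
    all (wf ar Sig) ts -> wf ar Sig (h g ts) }.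

Section Decompression.
Variables (Sig Sig' : pred F) (h : F -> seq term -> term).
Hypothesis hE : expansion Sig Sig' h.
Notation D := (decompress h).

Lemma decompress_plug c s : D (plug c s) = plug (D c) (D s).
Proof.
elim/tm_nested_ind: c => [f ts IH|x|X c IH|] //=; last by rewrite IH.
rewrite (expansion_natural hE (phi := fun c => plug c (D s))) // -!map_comp.
by congr h; apply: eq_map_all_tm.
Qed.

Lemma decompress_subst sv sc t :
  D (subst sv sc t) = subst (D \o sv) (D \o sc) (D t).
Proof.
elim/tm_nested_ind: t => [f ts IH|x|X c IH|] //=; last by rewrite decompress_plug IH.
rewrite (expansion_natural hE (phi := subst (D \o sv) (D \o sc))) // -!map_comp.
by congr h; apply: eq_map_all_tm.
Qed.

Lemma decompress_holes t : holes (D t) = holes t.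
Proof.
elim/tm_nested_ind: t => [f ts IH|x|X c IH|] //=.
by rewrite (expansion_holes hE) -map_comp; congr sumn; apply: eq_map_all_tm.
Qed.

Lemma decompress_novars t : novars (D t) = novars t.
Proof.
elim/tm_nested_ind: t => [f ts IH|x|X c IH|] //=.
by rewrite (expansion_novars hE) all_map; elim: ts IH => //= t ts IHts [-> /IHts ->].
Qed.

Lemma decompress_wf t : wf ar Sig' t -> wf ar Sig (D t).
Proof.
elim/tm_nested_ind: t => [f ts IH|x|X c IH|] //=.
case/and3P=> Sf /eqP sz wts; apply: (expansion_wf hE) => //; first by rewrite size_map.
by rewrite all_map; apply: all_tmP (all_tm_apply IH wts).
Qed.

Lemma decompress_ground t : is_ground ar Sig' t -> is_ground ar Sig (D t).
Proof.
case/andP=> /andP[wt ht] nt.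
by rewrite /is_ground /is_term decompress_wf // decompress_holes ht decompress_novars.
Qed.

Lemma decompress_gctx t : is_gctx ar Sig' t -> is_gctx ar Sig (D t).
Proof.
case/andP=> /andP[wt ht] nt.
by rewrite /is_gctx /is_ctxterm decompress_wf // decompress_holes ht decompress_novars.
Qed.

Lemma solvable_decompress u v u' v' : D u' = u -> D v' = v ->
  solvable ar Sig' u' v' -> solvable ar Sig u v.
Proof.
move=> <- <- [sv [sc [gsv gsc eq_uv]]].
exists (D \o sv), (D \o sc); split => [x|X|].
- exact: decompress_ground.
- exact: decompress_gctx.
- by rewrite -!decompress_subst eq_uv.
Qed.
End Decompression.

Section LeafCompression.
Variables (f : F) (i : nat) (a f' : F).

Definition leaf_expansion (g : F) (ts : seq term) : term :=
  if g == f' then App f (take i.-1 ts ++ App a [::] :: drop i.-1 ts) else App g ts.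

Lemma leaf_expansionP (Sig : pred F) : Sig f -> Sig a -> ar a = 0 -> 0 < ar f ->
  ar f' = (ar f).-1 -> expansion Sig [pred g | Sig g || (g == f')] leaf_expansion.
Proof.
move=> Sf Sa ar_a ar_f ar_f'; rewrite /leaf_expansion.
split=> [phi phiE|||] g ts; case: (g =P f') => [gf'|ne_gf'] //=.
- by rewrite phiE map_cat /= phiE map_take map_drop.
- by rewrite map_cat sumn_cat /= add0n -sumn_cat -map_cat cat_take_drop.
- by rewrite all_cat /= -all_cat cat_take_drop.
- move=> _; rewrite gf' => sz wts.
  rewrite Sf size_cat /= addnS -size_cat cat_take_drop sz ar_f'.
  by rewrite prednK // eqxx all_cat /= Sa ar_a -all_cat cat_take_drop wts.
- by case: eqP => // _; rewrite orbF => -> ->; rewrite eqxx.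
Qed.

Lemma decompress_leaf_comp t : 0 < i -> ~~ occurs f' t ->
  decompress leaf_expansion (leaf_comp f i a f' t) = t.
Proof.
move=> i_gt0; elim/tm_nested_ind: t => [g ts IH|x|X c IH|] //=; last by move=> /IH ->.
rewrite negb_or => /andP[ne_gf' f'_ts].
have Dts : map (decompress leaf_expansion) (map (leaf_comp f i a f') ts) = ts.
  rewrite -map_comp -[RHS]map_id; apply: eq_map_all_tm.
  by apply: all_tm_apply IH _; rewrite all_predC.
case: ifP => [/andP[/eqP-> leaf_i]|_] /=; last by rewrite /leaf_expansion (negbTE ne_gf') Dts.
rewrite /leaf_expansion eqxx map_cat map_take map_drop Dts.
case: i i_gt0 leaf_i => // j _ leaf_j /=.
have lt_j : j < size ts.
  by rewrite ltnNge; apply/negP => /(nth_default Hole) nth_j; rewrite nth_j in leaf_j.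
have nth_j : nth Hole ts j = App a [::].
  by case: (nth Hole ts j) leaf_j => // b [] // /eqP ->.
have size_take_j : size (take j ts) = j by rewrite size_takel // ltnW.
by rewrite take_size_cat // drop_size_cat // -nth_j -drop_nth // cat_take_drop.
Qed.
End LeafCompression.

Section PairCompression.
Variables (a b c : F).

Definition pair_expansion (g : F) (ts : seq term) : term :=
  if g == c then App a [:: App b ts] else App g ts.

Lemma pair_expansionP (Sig : pred F) : Sig a -> Sig b -> ar a = 1 -> ar b = 1 -> ar c = 1 ->
  expansion Sig [pred g | Sig g || (g == c)] pair_expansion.
Proof.
move=> Sa Sb ar_a ar_b ar_c; rewrite /pair_expansion.
split=> [phi phiE|||] g ts; case: (g =P c) => [gc|ne_gc] //=.
- by rewrite phiE /= phiE.
- by rewrite addn0.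
- by rewrite andbT.
- by move=> _; rewrite gc => sz wts; rewrite Sa ar_a Sb ar_b -ar_c sz eqxx wts.
- by case: eqP => // _; rewrite orbF => -> ->; rewrite eqxx.
Qed.

Lemma pair_comp_App g (ts : seq term) :
  (exists2 s, ts = [:: App b [:: s]] /\ g = a &
     pair_comp a b c (App g ts) = App c [:: pair_comp a b c s])
  \/ pair_comp a b c (App g ts) = App g (map (pair_comp a b c) ts).
Proof.
case: ts => [|[h [|s [|? ?]]|?|? ?|] [|? ?]]; try by right.
case: (g =P a) => [->|ne_ga]; last by right; rewrite /= (introF eqP ne_ga).
case: (h =P b) => [->|ne_hb]; last by right; rewrite /= eqxx (introF eqP ne_hb).
by left; exists s; rewrite //= !eqxx.
Qed.

Lemma pair_comp_App_neq g (ts : seq term) : g != a ->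
  pair_comp a b c (App g ts) = App g (map (pair_comp a b c) ts).
Proof. by case: (pair_comp_App g ts) => // [[s [_ ->]]]; rewrite eqxx. Qed.

(* In the case a(b(s)), [a != b] makes [pair_comp] act letterwise on b(s),
   so the induction hypothesis for b(s) gives the claim for s. *)
Lemma decompress_pair_comp t : a != b -> ~~ occurs c t ->
  decompress pair_expansion (pair_comp a b c t) = t.
Proof.
move=> ne_ab; elim/tm_nested_ind: t => [g ts IH|x|X s IH|] //; last by move=> /= /IH ->.
rewrite [occurs _ _]/= negb_or => /andP[ne_gc c_ts].
case: (pair_comp_App g ts) IH c_ts => [[s [-> ->] ->]|->] IH c_ts /=.
  case: IH => IH_bs _; rewrite has_seq1 in c_ts.
  move: (IH_bs c_ts); rewrite pair_comp_App_neq 1?eq_sym //= /pair_expansion.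
  move: c_ts; rewrite /= negb_or => /andP[/negbTE -> _] /= [->].
  by rewrite eqxx.
rewrite /pair_expansion (negbTE ne_gc); congr App.
rewrite -map_comp -[RHS]map_id; apply: eq_map_all_tm.
by apply: all_tm_apply IH _; rewrite all_predC.
Qed.
End PairCompression.

Section ChainCompression.
Variables (a : F) (al : nat -> F).
Hypothesis al_inj : forall l1 l2, 0 < l1 -> 0 < l2 -> al l1 = al l2 -> l1 = l2.

(* The index l of a letter a_l; whether a letter is of this form is not
   decidable in general, hence the classical choice. *)
Definition chain_index (g : F) : option nat :=
  match excluded_middle_informative (exists l, 0 < l /\ al l = g) with
  | left H => Some (proj1_sig (constructive_indefinite_description _ H))
  | right _ => None
  end.

Lemma chain_index_Some g l : chain_index g = Some l -> 0 < l /\ al l = g.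
Proof.
rewrite /chain_index; case: excluded_middle_informative => // H [<-].
exact: proj2_sig (constructive_indefinite_description _ H).
Qed.

Lemma chain_index_None g l : chain_index g = None -> 0 < l -> al l <> g.
Proof.
rewrite /chain_index; case: excluded_middle_informative => // H _ l_gt0 al_l.
by apply: H; exists l.
Qed.

Lemma chain_index_al l : 0 < l -> chain_index (al l) = Some l.
Proof.
move=> l_gt0; case E: (chain_index (al l)) => [l'|].
  by case: (chain_index_Some E) => l'_gt0 /al_inj ->.
by case: (chain_index_None E l_gt0).
Qed.

Notation A := (fun t : term => App a [:: t]).

Definition chain_expansion (g : F) (ts : seq term) : term :=
  if chain_index g is Some l then iter l.-1 A (App a ts) else App g ts.

Lemma chain_expansionP (Sig Sig' : pred F) : Sig a -> ar a = 1 ->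
  (forall l, 0 < l -> ar (al l) = 1) ->
  (forall g, Sig' g <-> Sig g \/ exists2 l, 0 < l & g = al l) ->
  expansion Sig Sig' chain_expansion.
Proof.
move=> Sa ar_a ar_al Sig'E; rewrite /chain_expansion.
split=> [phi phiE|||] g ts; case E: (chain_index g) => [l|] //=.
- by elim: l.-1 => [|n IHn] /=; rewrite phiE //= IHn.
- by elim: l.-1 => //= n ->; rewrite addn0.
- by elim: l.-1 => //= n ->; rewrite andbT.
- have [l_gt0 <-] := chain_index_Some E; move=> _ sz wts.
  by elim: l.-1 => [|n /= ->]; rewrite /= Sa ?ar_a // sz ar_al // ar_a eqxx wts.
- case/Sig'E => [Sg|[l l_gt0 gE]]; last by case: (chain_index_None E l_gt0).
  by move=> sz wts; rewrite Sg sz eqxx wts.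
Qed.

Lemma decompress_wrap k t :
  decompress chain_expansion (Defs.wrap al k t) = iter k A (decompress chain_expansion t).
Proof. by case: k => //= k; rewrite /chain_expansion chain_index_al //= -iterSr. Qed.

Lemma decompress_chain_comp t : (forall l, 0 < l -> ~~ occurs (al l) t) ->
  forall k, decompress chain_expansion (chain_comp a al k t) = iter k A t.
Proof.
elim/tm_nested_ind: t => [g ts IH|x|X s IH|] /= fresh k; try by rewrite decompress_wrap.
  have g_plain : chain_index g = None.
    case E: (chain_index g) => [l|] //; case: (chain_index_Some E) => l_gt0 gE.
    by move: (fresh l l_gt0); rewrite gE eqxx.
  have {}IH : all_tm (fun t => forall k,
      decompress chain_expansion (chain_comp a al k t) = iter k A t) ts.
    by apply: all_tm_apply_forall IH _ => l /fresh; rewrite negb_or all_predC => /andP[].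
  have Dts : map (decompress chain_expansion) (map (chain_comp a al 0) ts) = ts.
    rewrite -map_comp -[RHS]map_id; apply: eq_map_all_tm.
    exact: all_tm_impl IH (fun t IHt => IHt 0).
  clear fresh; case: ts IH Dts => [|s [|s' ts]] IH Dts.
  - by rewrite decompress_wrap /= /chain_expansion g_plain.
  - case: IH => IHs _; case: eqP => [->|_]; first by rewrite IHs iterSr.
    by rewrite decompress_wrap /= /chain_expansion g_plain IHs.
  - by rewrite decompress_wrap decompress_App Dts /chain_expansion g_plain.
by rewrite decompress_wrap /= IH.
Qed.
End ChainCompression.

End Terms.

Theorem lemma4p2 (F V CV : eqType) (ar : F -> nat) (Sig : pred F)
    (u v : tm F V CV) (Sig' : pred F) (u' v' : tm F V CV) :
  is_term ar Sig u -> is_term ar Sig v ->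
  step ar Sig u v Sig' u' v' ->
  solvable ar Sig' u' v' -> solvable ar Sig u v.
Proof.
move=> _ _ []; clear Sig' u' v'.
- exact: solvable_repl_CX_left.
- exact: solvable_repl_x_left.
- exact: solvable_repl_CX_right.
- exact: solvable_repl_x.
- move=> f i a f' Sf Sa /andP[i_gt0 le_i] ar_a ar_f' /andP[f'_u f'_v].
  apply: (solvable_decompress (h := leaf_expansion f i a f')).
  + by apply: leaf_expansionP => //; apply: leq_trans le_i.
  + by apply: decompress_leaf_comp.
  + by apply: decompress_leaf_comp.
- move=> a b c Sa Sb ne_ab ar_a ar_b ar_c /andP[c_u c_v].
  apply: (solvable_decompress (h := pair_expansion a b c)).
  + exact: pair_expansionP.
  + by apply: decompress_pair_comp.
  + by apply: decompress_pair_comp.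
- move=> a al Sig' Sa ar_a ar_al al_inj fresh Sig'E.
  apply: (solvable_decompress (h := chain_expansion a al)).
  + exact: chain_expansionP.
  + by apply: decompress_chain_comp => // l /fresh /andP[].
  + by apply: decompress_chain_comp => // l /fresh /andP[].
Qed.
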